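(* Let $(X,Y)$ be a random pair with values in $\mathcal X\times\{1,\dots,K\}$, let $f:\mathcal X\to\Delta^K$ be a probabilistic classifier, and let $\ell:\mathcal X\times\{1,\dots,K\}\to\mathbb R$ be a loss with $\ell(X,Y)$ and $R(X,Y)\ell(X,Y)$ integrable. Suppose that either (i) $\mathbb E[(R(X,Y)-1)(\ell(X,Y)-1)]\ge -\mathbb E[\ell(X,Y)]$, or (ii) $f(X)_Y>0$ almost surely and $\ell$ is the cross-entropy loss $\ell(X,Y)=-\log f(X)_Y$. Then $$\mathbb E[R(X,Y)-1]\le \mathbb E[R(X,Y)\cdot \ell(X,Y)].$$
   Context: For $x\in\mathcal X$ and $y\in\{1,\dots,K\}$, the label rank is $R(x,y)=\sum_{l=1}^K \mathbf 1[f(x)_l\ge f(x)_y]$, where $f(x)_l$ is the $l$-th coordinate of $f(x)\in\Delta^K$ (the probability simplex). *)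

From HB Require Import structures.
From mathcomp Require Import all_boot all_order all_algebra.
From mathcomp Require Import all_classical all_reals all_analysis.
Set Implicit Arguments. Unset Strict Implicit. Unset Printing Implicit Defensive.
Import Order.TTheory GRing.Theory Num.Theory.
Local Open Scope ring_scope.

Definition in_simplex (R : realType) (K : nat) (p : 'I_K -> R) : Prop :=
  (forall l, 0 <= p l) /\ \sum_(l < K) p l = 1.

Definition label_rank (R : realType) (Xs : Type) (K : nat)
  (f : Xs -> 'I_K -> R) (x : Xs) (y : 'I_K) : R :=
  (#|[set l : 'I_K | f x y <= f x l]|)%:R.

From HB Require Import structures.
From mathcomp Require Import all_boot all_order all_algebra.
From mathcomp Require Import all_classical all_reals all_analysis.
From mathcomp Require Import ring lra.
Import Order.TTheory GRing.Theory Num.Theory.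
Local Open Scope ring_scope.
Local Open Scope classical_set_scope.

(* Pointwise, the label rank satisfies [R(x,y) f(x)_y <= 1], because every
   label it counts carries probability at least [f(x)_y] and the probabilities
   sum to 1.  With [ln p <= p - 1] this gives
   [R - 1 <= R (1 - f(x)_y) <= R * (- ln f(x)_y)], which integrates to case (ii).
   Case (i) is pure linearity: [(R - 1)(l - 1) = (R l - l) - (R - 1)]. *)

Section label_rank_bounds.
Variables (R : realType) (Xs : Type) (K : nat) (f : Xs -> 'I_K -> R).

Lemma label_rank_ge0 x y : 0 <= label_rank f x y.
Proof. exact: ler0n. Qed.

Lemma label_rank_le x y : label_rank f x y <= K%:R.
Proof. by rewrite ler_nat (leq_trans (max_card _)) // card_ord. Qed.

Lemma label_rank_mul_le1 x y : in_simplex (f x) -> label_rank f x y * f x y <= 1.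
Proof.
move=> [f_ge0 f_sum1]; rewrite /label_rank mulr_natl -sumr_const -f_sum1.
rewrite big_mkcond /=; apply: ler_sum => l _.
by rewrite inE; case: ifP.
Qed.

Lemma label_rank_sub1_le_cross_entropy x y : in_simplex (f x) -> 0 < f x y ->
  label_rank f x y - 1 <= label_rank f x y * - ln (f x y).
Proof.
move=> fx fxy_gt0.
have ln_le : ln (f x y) <= f x y - 1.
  by rewrite -[X in ln X](subrKC 1) le_ln1Dx // ltrBrDl addrN.
apply: (le_trans (y := label_rank f x y * (1 - f x y))).
  by rewrite mulrBr mulr1 lerB // label_rank_mul_le1.
by rewrite ler_wpM2l ?label_rank_ge0 // lerNr opprB.
Qed.

End label_rank_bounds.

Section measurable_label_rank.
Variables (d : measure_display) (T : measurableType d) (R : realType) (K : nat).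
Variables (g : T -> 'I_K -> R) (Y : T -> 'I_K).
Hypothesis mY : forall k, measurable [set w | Y w = k].
Hypothesis mg : forall k, measurable_fun setT (g ^~ k).

Lemma measurable_fun_at_label : measurable_fun setT (fun w => g w (Y w)).
Proof.
have -> : (fun w => g w (Y w)) =
    (fun w => \sum_(k < K) \1_[set w | Y w = k] w * g w k).
  apply/funext => w; rewrite (bigD1 (Y w)) //= big1 ?addr0.
    by rewrite indicE mem_set // mul1r.
  by move=> k /eqP YwNk; rewrite indicE memNset ?mul0r //= => /esym.
apply: measurable_sum => k.
exact/measurable_realfun.measurable_funM/mg/measurable_realfun.measurable_indic.
Qed.

Lemma measurable_label_rank : measurable_fun setT (fun w => label_rank g w (Y w)).
Proof.
have -> : (fun w => label_rank g w (Y w)) =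
    (fun w => \sum_(l < K) \1_[set w | g w (Y w) <= g w l] w).
  apply/funext => w; rewrite /label_rank -sum1_card natr_sum big_mkcond /=.
  by apply: eq_bigr => l _; rewrite inE indicE; case: ifPn => h;
    [rewrite mem_set|rewrite memNset //= => /(negP h)].
apply: measurable_sum => l; apply: measurable_realfun.measurable_indic.
have -> : [set w | g w (Y w) <= g w l] =
    setT `&` (fun w => g w (Y w) <= g w l) @^-1` [set true].
  by apply/seteqP; split => w /=; [split|case].
exact: measurable_realfun.measurable_fun_ler measurable_fun_at_label (mg l) _ _ _.
Qed.

End measurable_label_rank.

Lemma integrable_label_rank_sub1 (d : measure_display) (T : measurableType d)
  (R : realType) (mu : {finite_measure set T -> \bar R}) (K : nat)
  (g : T -> 'I_K -> R) (Y : T -> 'I_K) :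
  (forall k, measurable [set w | Y w = k]) ->
  (forall k, measurable_fun setT (g ^~ k)) ->
  mu.-integrable setT (fun w => (label_rank g w (Y w) - 1)%:E).
Proof.
move=> mY mg; apply: measurable_bounded_integrable => //.
- by rewrite ltey_eq fin_num_measure.
- by apply: measurable_realfun.measurable_funB => //; exact: measurable_label_rank.
exists (K%:R + 1); split; first exact: num_real.
move=> M KM w _ /=; apply: le_trans (ltW KM).
apply: le_trans (ler_normB _ _) _.
by rewrite normr1 ger0_norm ?label_rank_ge0 // lerD2r label_rank_le.
Qed.

Section integral_comparisons.
Local Open Scope ereal_scope.
Variables (d : measure_display) (T : measurableType d) (R : realType).
Variables (mu : {measure set T -> \bar R}) (D : set T).
Hypothesis mD : measurable D.

Lemma ae_le_integral_EFin (f g : T -> R) :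
  mu.-integrable D (EFin \o f) -> mu.-integrable D (EFin \o g) ->
  {ae mu, forall x, D x -> (f x <= g x)%R} ->
  \int[mu]_(x in D) (f x)%:E <= \int[mu]_(x in D) (g x)%:E.
Proof.
move=> intf intg f_le_g.
rewrite -sube_ge0 ?(integrable_fin_num mD intf) // -integralB_EFin //.
under eq_integral do rewrite -EFinB.
have mgf : measurable_fun D (fun x => (g x - f x)%R).
  by apply: measurable_realfun.measurable_funB;
    apply/measurable_realfun.measurable_EFinP;
    [exact: measurable_int intg | exact: measurable_int intf].
rewrite (ae_eq_integral (fun x => (Num.max (g x - f x) 0)%:E)) //.
- by apply: integral_ge0 => x _; rewrite lee_fin le_max lexx orbT.
- exact/measurable_realfun.measurable_EFinP.
- exact/measurable_realfun.measurable_EFinP/measurable_realfun.measurable_maxr.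
apply: filterS f_le_g => x fx_le_gx Dx.
by rewrite max_l // subr_ge0 fx_le_gx.
Qed.

Lemma integral_subr1_le_integral_mul (u v : T -> R) :
  mu.-integrable D (fun x => (u x - 1)%:E) -> mu.-integrable D (EFin \o v) ->
  mu.-integrable D (fun x => (u x * v x)%:E) ->
  - (\int[mu]_(x in D) (v x)%:E) <=
    \int[mu]_(x in D) ((u x - 1) * (v x - 1))%:E ->
  \int[mu]_(x in D) (u x - 1)%:E <= \int[mu]_(x in D) (u x * v x)%:E.
Proof.
move=> int_u1 int_v int_uv.
have int_uvv : mu.-integrable D (fun x => (u x * v x - v x)%:E).
  apply: eq_integrable mD _ _ _ (integrableB mD int_uv int_v).
  by move=> x _; rewrite EFinB.
have -> : \int[mu]_(x in D) ((u x - 1) * (v x - 1))%:E =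
    \int[mu]_(x in D) (u x * v x)%:E - \int[mu]_(x in D) (v x)%:E
    - \int[mu]_(x in D) (u x - 1)%:E.
  rewrite -[X in X - _]integralB_EFin // -integralB_EFin //.
  by apply: eq_integral => x _; rewrite -!EFinB; congr EFin; ring.
move: (integrable_fin_num mD int_u1) (integrable_fin_num mD int_v)
  (integrable_fin_num mD int_uv).
move=> /fineK <- /fineK <- /fineK <-.
by rewrite -!EFinB -EFinN !lee_fin; lra.
Qed.

End integral_comparisons.

Theorem theorem2 (R : realType) (dO : measure_display) (Omega : measurableType dO)
  (P : probability Omega R) (d : measure_display) (Xs : measurableType d) (K : nat)
  (X : Omega -> Xs) (Y : Omega -> 'I_K)
  (f : Xs -> 'I_K -> R) (loss : Xs -> 'I_K -> R)
  (mX : measurable_fun setT X)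
  (mY : forall k : 'I_K, measurable [set w | Y w = k])
  (mf : forall k : 'I_K, measurable_fun setT (fun x => f x k))
  (hf : forall x, in_simplex (f x))
  (int_l : P.-integrable setT (fun w => (loss (X w) (Y w))%:E))
  (int_Rl : P.-integrable setT
     (fun w => (label_rank f (X w) (Y w) * loss (X w) (Y w))%:E))
  (hcase :
     (\int[P]_w (((label_rank f (X w) (Y w) - 1) * (loss (X w) (Y w) - 1))%:E)
        >= - \int[P]_w ((loss (X w) (Y w))%:E))%E
     \/
     ((\forall w \ae P, 0 < f (X w) (Y w)) /\
      (forall x y, loss x y = - ln (f x y)))) :
  (\int[P]_w ((label_rank f (X w) (Y w) - 1)%:E)
     <= \int[P]_w ((label_rank f (X w) (Y w) * loss (X w) (Y w))%:E))%E.
Proof.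
have int_r : P.-integrable setT (fun w => (label_rank f (X w) (Y w) - 1)%:E).
  exact: (@integrable_label_rank_sub1 _ _ _ P _ (fun w => f (X w)) _ mY
    (fun k => measurableT_comp (mf k) mX)).
case: hcase => [cross_term | [fXY_gt0 cross_entropy]].
  exact: integral_subr1_le_integral_mul.
apply: ae_le_integral_EFin => //.
apply: filterS fXY_gt0 => w fXY_gt0 _.
by rewrite cross_entropy label_rank_sub1_le_cross_entropy.
Qed.
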